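(* Consider an $N$-player distributionally robust game (as defined in the context) with ambiguity set $\mathcal{F}$, and suppose every player is risk neutral, i.e. $\varepsilon_i = 1$ for all $i \in \{1,\dots,N\}$. Then: (1) If $\mathcal{F} = \{ Q : \mathbb{E}_Q[\tilde{\mathbf{P}}] = \boldsymbol{\Psi}\}$ for a fixed matrix $\boldsymbol{\Psi}\in\mathbb{R}^{N\times\prod_{k=1}^N a_k}$, then the set of Distributionally Robust Optimization Equilibria of the game coincides with the set of Nash equilibria of the complete information game with payoff matrix $\boldsymbol{\Psi}$. (2) If the ambiguity set is a singleton, $\mathcal{F} = \{Q\}$, then the set of Distributionally Robust Optimization Equilibria coincides with the set of Bayesian Nash equilibria of the Bayesian game in which $\tilde{\mathbf{P}}$ has distribution $Q$. (3) If $\mathcal{F} = \{ Q : Q[\mathbf{W}\cdot \mathrm{vec}(\mathbb{E}_Q[\tilde{\mathbf{P}}]) \le \mathbf{h}] = 1\}$, then the set of Distributionally Robust Optimization Equilibria coincides with the set of Robust Optimization Equilibria of the robust game with uncertainty set $\mathcal{U} = \{\mathbf{P} : \mathbf{W}\cdot\mathrm{vec}(\mathbf{P}) \le \mathbf{h}\}$.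
   Context: A finite $N$-player game: player $i$ has actions $\{1,\dots,a_i\}$ and mixed strategy set $S_{a_i} = \{\mathbf{x}^i\in\mathbb{R}^{a_i} : \mathbf{x}^i\ge 0,\ \sum_{j=1}^{a_i} x^i_j = 1\}$; $S=\prod_{i} S_{a_i}$. A payoff matrix $\mathbf{P}\in\mathbb{R}^{N\times\prod_{k=1}^N a_k}$ has entries $\mathbf{P}^i_{(j_1,\dots,j_N)}$, the payoff to player $i$ when each player $k$ plays action $j_k$. The expected payoff is $\pi_i(\mathbf{P};\mathbf{x}^1,\dots,\mathbf{x}^N) = \sum_{j_1=1}^{a_1}\cdots\sum_{j_N=1}^{a_N}\mathbf{P}^i_{(j_1,\dots,j_N)}\prod_{k=1}^N x^k_{j_k}$. Write $\mathbf{x}^{-i}$ for the strategies of all players except $i$, and $(\mathbf{x}^{-i},\mathbf{u}^i)$ for the profile with $\mathbf{x}^i$ replaced by $\mathbf{u}^i$. $\mathrm{vec}(\mathbf{A})$ is the column vector obtained by stacking the rows of $\mathbf{A}$. $\tilde{\mathbf{P}}$ denotes a random payoff matrix. For a loss random variable $L$ and $\varepsilon\in(0,1]$, $Q\text{-CVaR}_\varepsilon(L) = \min_{\zeta\in\mathbb{R}} \zeta + \frac{1}{\varepsilon}\mathbb{E}_Q[L-\zeta]^+$, with $[x]^+=\max\{x,0\}$. Distributionally robust game: there is a commonly known ambiguity set $\mathcal{F}$ of probability distributions $Q$ of $\tilde{\mathbf{P}}$ and each player $i$ has a risk level $\varepsilon_i\in(0,1]$. A profile $(\mathbf{x}^1,\dots,\mathbf{x}^N)\in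 S$ is a Distributionally Robust Optimization Equilibrium iff for every $i$, $\mathbf{x}^i\in\arg\min_{\mathbf{u}^i\in S_{a_i}}\sup_{Q\in\mathcal{F}} Q\text{-CVaR}_{\varepsilon_i}[-\pi_i(\tilde{\mathbf{P}};\mathbf{x}^{-i},\mathbf{u}^i)]$. Nash equilibrium of the game with fixed payoff matrix $\check{\mathbf{P}}$: for every $i$, $\mathbf{x}^i\in\arg\max_{\mathbf{u}^i\in S_{a_i}}\pi_i(\check{\mathbf{P}};\mathbf{x}^{-i},\mathbf{u}^i)$. Bayesian Nash equilibrium (with $\tilde{\mathbf{P}}$ distributed according to a known distribution): for every $i$, $\mathbf{x}^i\in\arg\max_{\mathbf{u}^i\in S_{a_i}}\mathbb{E}[\pi_i(\tilde{\mathbf{P}};\mathbf{x}^{-i},\mathbf{u}^i)]$. Robust Optimization Equilibrium with uncertainty set $\mathcal{U}$: for every $i$, $\mathbf{x}^i\in\arg\max_{\mathbf{u}^i\in S_{a_i}}\inf_{\tilde{\mathbf{P}}\in\mathcal{U}}\pi_i(\tilde{\mathbf{P}};\mathbf{x}^{-i},\mathbf{u}^i)$. *)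

From HB Require Import structures.
From mathcomp Require Import all_boot all_order all_algebra.
From mathcomp Require Import all_classical all_reals all_analysis.
Unset Printing Implicit Defensive.
Import Order.TTheory GRing.Theory Num.Theory.
Local Open Scope classical_set_scope.
Local Open Scope ring_scope.

(* Game with N players; player i has a i actions, indexed by 'I_(a i)
   (action j+1 of the paper is the ordinal j). *)

Definition profile {N : nat} (a : 'I_N -> nat) :=
  {dffun forall i : 'I_N, 'I_(a i)}.

Definition pidx {N : nat} (a : 'I_N -> nat) := ('I_N * profile a)%type.

(* a payoff matrix P in R^{N x prod_k a_k}, P (i, j) = P^i_{(j_1..j_N)} *)
Definition paymx (R : realType) {N : nat} (a : 'I_N -> nat) := pidx a -> R.

HB.instance Definition _ (R : realType) {N : nat} (a : 'I_N -> nat) :=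
  gen_eqMixin (paymx R a).
HB.instance Definition _ (R : realType) {N : nat} (a : 'I_N -> nat) :=
  gen_choiceMixin (paymx R a).
HB.instance Definition _ (R : realType) {N : nat} (a : 'I_N -> nat) :=
  isPointed.Build (paymx R a) (fun _ => 0).

Definition entry_sets (R : realType) {N : nat} (a : 'I_N -> nat)
  : set (set (paymx R a)) :=
  [set A | exists (k : pidx a) (B : set R),
     measurable B /\ A = (fun P : paymx R a => P k) @^-1` B].

(* measurable space of payoff matrices (Borel = product sigma-algebra) *)
Definition PM (R : realType) {N : nat} (a : 'I_N -> nat)
  : measurableType (sigma_display (entry_sets R a)) :=
  g_sigma_algebraType (entry_sets R a).

Definition strat (R : realType) {N : nat} (a : 'I_N -> nat) :=
  forall i : 'I_N, 'I_(a i) -> R.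

Definition in_simplex {R : realType} {n : nat} (u : 'I_n -> R) : Prop :=
  (forall j, 0 <= u j) /\ \sum_(j < n) u j = 1.

Definition in_S {R : realType} {N : nat} {a : 'I_N -> nat} (x : strat R a)
  : Prop := forall i, in_simplex (x i).

Definition pi_dev {R : realType} {N : nat} {a : 'I_N -> nat}
  (P : paymx R a) (x : strat R a) (i : 'I_N) (u : 'I_(a i) -> R) : R :=
  \sum_(j : profile a)
     P (i, j) * (u (j i) * \prod_(k < N | k != i) x k (j k)).

Local Open Scope ereal_scope.

Definition CVaR {R : realType} {N : nat} {a : 'I_N -> nat}
  (Q : probability (PM R a) R) (eps : R) (L : PM R a -> R) : \bar R :=
  ereal_inf [set (z%:E + (eps^-1)%:E * \int[Q]_P (Num.max (L P - z)%R 0%R)%:E)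
            | z in [set: R]].

Definition dro_obj {R : realType} {N : nat} {a : 'I_N -> nat}
  (F : set (probability (PM R a) R)) (eps : 'I_N -> R)
  (x : strat R a) (i : 'I_N) (u : 'I_(a i) -> R) : \bar R :=
  ereal_sup [set CVaR Q (eps i) (fun P : PM R a => (- pi_dev P x i u)%R)
            | Q in F].

Definition DROE {R : realType} {N : nat} {a : 'I_N -> nat}
  (F : set (probability (PM R a) R)) (eps : 'I_N -> R) (x : strat R a)
  : Prop :=
  in_S x /\
  forall i (u : 'I_(a i) -> R), in_simplex u ->
    dro_obj F eps x i (x i) <= dro_obj F eps x i u.

Definition NashEq {R : realType} {N : nat} {a : 'I_N -> nat}
  (P : paymx R a) (x : strat R a) : Prop :=
  in_S x /\
  forall i (u : 'I_(a i) -> R), in_simplex u ->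
    (pi_dev P x i u <= pi_dev P x i (x i))%R.

Definition BayesNashEq {R : realType} {N : nat} {a : 'I_N -> nat}
  (Q : probability (PM R a) R) (x : strat R a) : Prop :=
  in_S x /\
  forall i (u : 'I_(a i) -> R), in_simplex u ->
    \int[Q]_P (pi_dev P x i u)%:E <= \int[Q]_P (pi_dev P x i (x i))%:E.

Definition RobustEq {R : realType} {N : nat} {a : 'I_N -> nat}
  (U : set (paymx R a)) (x : strat R a) : Prop :=
  in_S x /\
  forall i (u : 'I_(a i) -> R), in_simplex u ->
    ereal_inf [set (pi_dev P x i u)%:E | P in U]
      <= ereal_inf [set (pi_dev P x i (x i))%:E | P in U].

Definition has_mean {R : realType} {N : nat} {a : 'I_N -> nat}
  (Q : probability (PM R a) R) : Prop :=
  forall k : pidx a, Q.-integrable setT (fun P : PM R a => (P k)%:E).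

(* E_Q[P~] (meaningful when has_mean Q) *)
Definition mean {R : realType} {N : nat} {a : 'I_N -> nat}
  (Q : probability (PM R a) R) : paymx R a :=
  fun k => fine (\int[Q]_P (P k)%:E).

(* W . vec(P), with W indexed by rows 'I_m and columns pidx a *)
Definition Wvec {R : realType} {N : nat} {a : 'I_N -> nat} {m : nat}
  (W : 'I_m -> pidx a -> R) (P : paymx R a) : 'I_m -> R :=
  fun r => (\sum_(k : pidx a) W r k * P k)%R.

(* With risk level 1 the minimisation over z defining CVaR returns the mean:
   z + E[(L - z)^+] = E[L] + E[(z - L)^+] >= E[L], and the last term tends to 0
   as z -> -oo by dominated convergence.  Since pi_i is linear in the payoff
   matrix, a risk-neutral player's worst case over F is then
   - inf { pi_i(M; x^-i, u) | M the mean of some Q in F },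
   so the DRO equilibria for F are the robust equilibria whose uncertainty set
   is the set of means of F.  Dirac measures realise every matrix as a mean,
   which identifies that set as {Psi}, {E_Q[P~]} and U in the three cases. *)

From HB Require Import structures.
From mathcomp Require Import all_boot all_order all_algebra.
From mathcomp Require Import all_classical all_reals all_analysis.
From mathcomp Require Import lra measurable_realfun.
Import Order.TTheory GRing.Theory Num.Theory.
Local Open Scope classical_set_scope.
Local Open Scope ring_scope.

Lemma maxr0_split {R : realDomainType} (t : R) :
  Num.max t 0 = t + Num.max (- t) 0.
Proof.
have [t_le0|t_gt0] := leP t 0.
  by rewrite max_l ?addrN // oppr_ge0.
by rewrite max_r ?addr0 // oppr_le0 ltW.
Qed.

Section risk_neutral_cvar.
Local Open Scope ereal_scope.
Context {R : realType} {d : measure_display} {T : measurableType d}.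
Variables (Q : probability T R) (f : T -> R).
Hypothesis intf : Q.-integrable setT (EFin \o f).

Let mf : measurable_fun setT f.
Proof. by apply/measurable_EFinP; exact: measurable_int intf. Qed.

Let integrable_subr (z : R) : Q.-integrable setT (fun t => (f t - z)%:E).
Proof.
apply: eq_integrable (integrableB measurableT intf
  (finite_measure_integrable_cst _ z measurableT)) => //.
Qed.

Let integral_subr (z : R) :
  \int[Q]_t (f t - z)%:E = \int[Q]_t (f t)%:E - z%:E.
Proof.
rewrite -[z%:E]mule1 -(probability_setT Q) -integral_cst //.
by rewrite integralB_EFin //; exact: finite_measure_integrable_cst.
Qed.

Let integrable_lower_excess (z : R) :
  Q.-integrable setT (fun t => (Num.max (z - f t) 0)%:E).
Proof.
apply: (le_integrable measurableT _ _ (integrableN (integrable_subr z))).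
  by apply/measurable_EFinP; apply: measurable_maxr => //; exact: measurable_funB.
move=> t _ /=; rewrite lee_fin opprB.
by have [_|_] := leP (z - f t)%R 0%R; rewrite ?normr0.
Qed.

Lemma integral_upper_excess (z : R) :
  z%:E + \int[Q]_t (Num.max (f t - z) 0)%:E =
  \int[Q]_t (f t)%:E + \int[Q]_t (Num.max (z - f t) 0)%:E.
Proof.
under eq_integral do rewrite maxr0_split opprB EFinD.
rewrite (integralD measurableT (integrable_subr z) (integrable_lower_excess z)).
by rewrite integral_subr addeA [z%:E + _]addeC subeK.
Qed.

Lemma integral_lower_excess_cvg0 :
  \int[Q]_t (Num.max (- n%:R - f t) 0)%:E @[n --> \oo] --> 0.
Proof.
have [] := @dominated_convergence _ _ _ Q setT measurableT
  (fun n t => (Num.max (- n%:R - f t) 0)%:E) (cst 0) (abse \o (EFin \o f)).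
- by move=> n; apply/measurable_EFinP; apply: measurable_maxr => //;
    exact: measurable_funB.
- exact: measurable_cst.
- apply: aeW => t _; apply: cvg_near_cst; near=> n.
  have fn : (`|f t| <= n%:R)%R by near: n; exact: nbhs_infty_ger.
  have := ler_norm (- f t)%R; rewrite normrN => Nf_le.
  by have [//|?] := lerP (- n%:R - f t)%R 0%R; exfalso; lra.
- exact: integrable_abse.
- apply: aeW => t n _ /=; rewrite lee_fin.
  have := ler_norm (- f t)%R; rewrite normrN => Nf_le.
  have [_|gt0] := lerP (- n%:R - f t)%R 0%R; first by rewrite normr0.
  by rewrite ger0_norm ?(ltW gt0) //; have := ler0n R n; lra.
by move=> _ _; rewrite integral0.
Unshelve. all: end_near.
Qed.

Lemma cvar1_integral :
  ereal_inf [set z%:E + \int[Q]_t (Num.max (f t - z) 0)%:E | z in [set: R]]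
  = \int[Q]_t (f t)%:E.
Proof.
apply/eqP; rewrite eq_le; apply/andP; split; last first.
  apply/ereal_infP => _ [z _ <-]; rewrite integral_upper_excess leeDl //.
  by apply: integral_ge0 => t _; rewrite lee_fin le_max lexx orbT.
have excess_cvg : \int[Q]_t (f t)%:E + \int[Q]_t (Num.max (- n%:R - f t) 0)%:E
    @[n --> \oo] --> \int[Q]_t (f t)%:E.
  rewrite -[X in _ --> X]adde0; apply: cvgeD; first by rewrite fin_num_adde_defl.
    exact: cvg_cst.
  exact: integral_lower_excess_cvg0.
rewrite -(cvg_lim _ excess_cvg) //; apply: lime_ge; first exact: cvgP excess_cvg.
apply: nearW => n; apply: ereal_inf_lbound; exists (- n%:R)%R => //.
by rewrite integral_upper_excess.
Qed.

End risk_neutral_cvar.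

Lemma probability_constE {R : realType} {d : measure_display}
    {T : measurableType d} (Q : probability T R) (C : Prop) :
  Q [set _ : T | C] = 1%E <-> C.
Proof.
split=> [QC1|c]; last first.
  by rewrite -(probability_setT Q); congr (Q _); apply/seteqP; split.
apply/not_notP => nC; move: QC1.
rewrite (_ : [set _ | C] = set0) ?measure0; last by apply/seteqP; split.
by move/eqP; rewrite eq_sym eqe oner_eq0.
Qed.

Section risk_neutral_game.
Local Open Scope ereal_scope.
Context {R : realType} {N : nat} {a : 'I_N -> nat}.
Implicit Types (Q : probability (PM R a) R) (P : paymx R a) (x : strat R a).

Lemma measurable_entry (k : pidx a) :
  measurable_fun setT (fun P : PM R a => P k).
Proof. by move=> _ B mB; rewrite setTI; apply: sub_sigma_algebra; exists k, B. Qed.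

Lemma measurable_EFin_entry (k : pidx a) :
  measurable_fun setT (fun P : PM R a => (P k)%:E).
Proof. by apply/measurable_EFinP; exact: measurable_entry. Qed.

Lemma integral_entry Q k : has_mean Q -> \int[Q]_P (P k)%:E = (mean Q k)%:E.
Proof.
move=> Q_mean; rewrite fineK // -integral_fin_num_abs //; last exact: measurable_entry.
by case/integrableP: (Q_mean k).
Qed.

Section entry_combination.
Context {J : finType} (g : J -> pidx a) (w : J -> R).

Let entry_combE P :
  (\sum_j P (g j) * w j)%:E = \sum_j (w j)%:E * (P (g j))%:E.
Proof. by rewrite -sumEFin; apply: eq_bigr => j _; rewrite mulrC. Qed.

Lemma integrable_entry_comb Q : has_mean Q ->
  Q.-integrable setT (fun P : PM R a => (\sum_j P (g j) * w j)%:E).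
Proof.
move=> Q_mean; apply: (eq_integrable measurableT
  (fun P : PM R a => \sum_j (w j)%:E * (P (g j))%:E)) => [P _|].
  by rewrite entry_combE.
by apply: integrable_sum => // j _; exact: integrableZl.
Qed.

Lemma integral_entry_comb Q : has_mean Q ->
  \int[Q]_P (\sum_j P (g j) * w j)%:E = (\sum_j mean Q (g j) * w j)%:E.
Proof.
move=> Q_mean; under eq_integral do rewrite entry_combE.
rewrite integral_sum //; last by move=> j; exact: integrableZl.
rewrite -sumEFin; apply: eq_bigr => j _.
by rewrite integralZl // integral_entry // -EFinM mulrC.
Qed.

End entry_combination.

Lemma integrable_pi_dev Q x i u : has_mean Q ->
  Q.-integrable setT (fun P : PM R a => (pi_dev P x i u)%:E).
Proof.
exact: (integrable_entry_comb (pair i)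
  (fun j => u (j i) * \prod_(k < N | k != i) x k (j k))%R).
Qed.

Lemma integral_pi_dev Q x i u : has_mean Q ->
  \int[Q]_P (pi_dev P x i u)%:E = (pi_dev (mean Q) x i u)%:E.
Proof.
exact: (integral_entry_comb (pair i)
  (fun j => u (j i) * \prod_(k < N | k != i) x k (j k))%R).
Qed.

Lemma pi_devN P x i u : pi_dev P x i (fun j => - u j)%R = (- pi_dev P x i u)%R.
Proof.
by rewrite /pi_dev -sumrN; apply: eq_bigr => j _; rewrite mulNr mulrN.
Qed.

Lemma cvar1_pi_dev Q x i u : has_mean Q ->
  CVaR Q 1 (fun P => - pi_dev P x i u)%R = (- pi_dev (mean Q) x i u)%:E.
Proof.
move=> Q_mean; rewrite /CVaR invr1.
under eq_imagel do rewrite mul1e.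
under eq_imagel do under eq_integral do rewrite -pi_devN.
rewrite cvar1_integral; last exact: integrable_pi_dev.
by rewrite integral_pi_dev // pi_devN.
Qed.

Lemma dirac_has_mean P0 : has_mean (\d_(P0 : PM R a) : probability (PM R a) R).
Proof.
move=> k; apply/integrableP; split; first exact: measurable_EFin_entry.
rewrite integral_dirac //; first by rewrite diracT mul1e ltry.
exact: measurableT_comp (measurable_EFin_entry k).
Qed.

Lemma mean_dirac P0 : mean (\d_(P0 : PM R a) : probability (PM R a) R) = P0.
Proof.
apply/funext => k; rewrite /mean integral_dirac //; first by rewrite diracT mul1e.
exact: measurable_EFin_entry.
Qed.

Lemma image_mean_has_mean (C : set (paymx R a)) :
  mean @` [set Q : probability (PM R a) R | has_mean Q /\ C (mean Q)] = C.
Proof.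
apply/seteqP; split=> [_ [Q [_ CQ] <-] //|P0 CP0].
exists (\d_(P0 : PM R a) : probability (PM R a) R); last exact: mean_dirac.
by split; [exact: dirac_has_mean | rewrite mean_dirac].
Qed.

Lemma image_mean_prob1 (C : set (paymx R a)) :
  mean @` [set Q : probability (PM R a) R |
             has_mean Q /\ Q [set _ : PM R a | C (mean Q)] = 1] = C.
Proof.
rewrite -[X in _ = X]image_mean_has_mean; congr (mean @` _); apply/seteqP.
by split=> Q [Q_mean QC]; split=> //; apply/(probability_constE Q).
Qed.

Section risk_neutral_players.
Variables (F : set (probability (PM R a) R)) (eps : 'I_N -> R).
Hypotheses (risk_neutral : forall i, eps i = 1%R)
  (F_mean : forall Q, F Q -> has_mean Q).

Lemma dro_obj_risk_neutral x i u :
  dro_obj F eps x i u = - ereal_inf [set (pi_dev P x i u)%:E | P in mean @` F].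
Proof.
rewrite /dro_obj -ereal_supN !image_comp risk_neutral; congr ereal_sup.
by apply: eq_imagel => Q FQ; exact: cvar1_pi_dev Q x i u (F_mean _ FQ).
Qed.

Lemma DROE_RobustEq x : DROE F eps x <-> RobustEq (mean @` F) x.
Proof.
split=> -[xS x_opt]; split=> // i u u_simplex.
  by move: (x_opt i u u_simplex); rewrite !dro_obj_risk_neutral leeN2.
by rewrite !dro_obj_risk_neutral leeN2; exact: x_opt.
Qed.

End risk_neutral_players.

Lemma RobustEq_set1 P x : RobustEq [set P] x <-> NashEq P x.
Proof.
by split=> -[xS x_opt]; split=> // i u u_simplex; move: (x_opt i u u_simplex);
  rewrite !image_set1 !ereal_inf1 lee_fin.
Qed.

Lemma BayesNashEq_mean Q x : has_mean Q -> BayesNashEq Q x <-> NashEq (mean Q) x.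
Proof.
by move=> Q_mean; split=> -[xS x_opt]; split=> // i u u_simplex;
  move: (x_opt i u u_simplex); rewrite !integral_pi_dev // lee_fin.
Qed.

End risk_neutral_game.

Theorem theorem1 (R : realType) (N : nat) (a : 'I_N -> nat)
  (eps : 'I_N -> R) (risk_neutral : forall i, eps i = 1) :
  (* (1) moment ambiguity set with known mean Psi *)
  (forall Psi : paymx R a,
     [set x : strat R a |
       DROE [set Q : probability (PM R a) R |
               has_mean Q /\ mean Q = Psi] eps x]
     = [set x | NashEq Psi x]) /\
  (* (2) singleton ambiguity set *)
  (forall Q : probability (PM R a) R, has_mean Q ->
     [set x : strat R a | DROE [set Q] eps x]
     = [set x | BayesNashEq Q x]) /\
  (* (3) polyhedral constraint on the mean *)
  (forall (m : nat) (W : 'I_m -> pidx a -> R) (h : 'I_m -> R),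
     [set x : strat R a |
       DROE [set Q : probability (PM R a) R |
               has_mean Q /\
               Q [set _ : PM R a | forall r, Wvec W (mean Q) r <= h r]
                 = 1%E] eps x]
     = [set x | RobustEq [set P : paymx R a | forall r, Wvec W P r <= h r] x]).
Proof.
split; [|split].
- move=> Psi; apply/funext => x; apply/propext.
  apply: iff_trans (DROE_RobustEq _ _ risk_neutral _ x) _; first by move=> Q [].
  by rewrite (image_mean_has_mean [set Psi]); exact: RobustEq_set1.
- move=> Q Q_mean; apply/funext => x; apply/propext.
  apply: iff_trans (DROE_RobustEq _ _ risk_neutral _ x) _; first by move=> _ ->.
  rewrite image_set1; apply: iff_trans (RobustEq_set1 _ _) _.
  exact: iff_sym (BayesNashEq_mean Q x Q_mean).
- move=> m W h; apply/funext => x; apply/propext.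
  apply: iff_trans (DROE_RobustEq _ _ risk_neutral _ x) _; first by move=> Q [].
  by rewrite (image_mean_prob1 [set P | forall r, Wvec W P r <= h r]).
Qed.
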